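(* Let $G$ be a finite simple graph with adjacency matrix $A$ and a Godsil-McKay switching set $X$, let $Y=V(G)\setminus X$, and let $G'$ be the graph obtained from $G$ by Godsil-McKay switching with respect to $X$. Order the vertices so that \[ A=\begin{bmatrix} B & M\\ M^{\top} & C\end{bmatrix},\qquad M=\begin{bmatrix} N & J & O\end{bmatrix}, \] where $B$ is the adjacency matrix of the subgraph induced on $X$, and the columns of $N$, $J$, $O$ correspond to the vertices of $Y$ having exactly $\tfrac12|X|$, exactly $|X|$, and no neighbours in $X$, respectively. Suppose that all vertices of $X$ have the same degree in $G$, and that $\overline{\Lambda}_G=\overline{\Lambda}_{G'}$. Suppose furthermore that either (a) $B=O$ (i.e. $X$ is a coclique), $N$ has at least two columns, and no two rows of $N$ are complementary; or (b) $B$ has all row sums equal to $\tfrac12|X|$, and no two rows of the matrix $[\,B\ \ N\,]$ are complementary. Let $H$ be a finite simple graph and $i$ a vertex of $H$. Then $\{i\}\times X$ is a Godsil-McKay switching set both in $H\times G$ and in $H\boxtimes G$. Moreover, if $i$ has degree at least one in $H$, then Godsil-McKay switching in $H\boxtimes G$ with respect to $\{i\}\times X$ yields a graph that is cospectral with but not isomorphic to $H\boxtimes G$; and if $i$ is adjacent in $H$ to a vertex of degree at least two, then Godsil-McKay switching in $H\times G$ with respect to $\{i\}\times X$ yields a graph that is cospectral with but not isomorphic to $H\times G$.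
   Context: A subset $X$ of the vertex set of a graph $G$ is a (Godsil-McKay) switching set if $X$ induces a regular subgraph of $G$ and every vertex outside $X$ has either $0$, $\tfrac12|X|$ or $|X|$ neighbours in $X$. Godsil-McKay switching with respect to $X$ produces the graph $G'$ on the same vertex set obtained as follows: for each vertex $x\notin X$ having exactly $\tfrac12|X|$ neighbours in $X$, delete the edges from $x$ to these neighbours and join $x$ instead to the other $\tfrac12|X|$ vertices of $X$; all other adjacencies are unchanged. For a graph $\Gamma$ and vertices $x,y$, $\lambda_\Gamma(x,y)$ is the number of common neighbours of $x$ and $y$; $\overline{\Lambda}_G$ denotes the multiset $\{\lambda_G(x,y)\mid x\in X,\ y\in Y\}$ and $\overline{\Lambda}_{G'}=\{\lambda_{G'}(x,y)\mid x\in X,\ y\in Y\}$. Two rows of a $(0,1)$-matrix are complementary if their sum is the all-ones row. Two graphs are cospectral if their adjacency matrices have the same spectrum. If $H$ has adjacency matrix $E$, the tensor product $H\times G$ is the graph on $V(H)\times V(G)$ with adjacency matrix $E\otimes A$ (i.e. $(j,x)\sim(k,y)$ iff $j\sim k$ in $H$ and $x\sim y$ in $G$), and the strengthened tensor product $H\boxtimes G$ is the graph on $V(H)\times V(G)$ with adjacency matrix $(E+I)\otimes A$ (i.e. $(j,x)\sim(k,y)$ iff ($j=k$ or $j\sim k$ in $H$) and $x\sim y$ in $G$). *)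

From mathcomp Require Import all_boot all_order all_algebra all_fingroup all_field.
Set Implicit Arguments. Unset Strict Implicit. Unset Printing Implicit Defensive.
Import GRing.Theory Num.Theory.
Local Open Scope ring_scope.

Definition simple_graph (T : finType) (e : rel T) : Prop :=
  symmetric e /\ irreflexive e.

Definition deg (T : finType) (e : rel T) (x : T) : nat := #|[set y | e x y]|.

Definition degIn (T : finType) (e : rel T) (X : {set T}) (v : T) : nat :=
  #|[set y in X | e v y]|.

Definition lambda (T : finType) (e : rel T) (x y : T) : nat :=
  #|[set z | e x z && e y z]|.

Definition gm_switching_set (T : finType) (e : rel T) (X : {set T}) : Prop :=
  (exists k, forall x, x \in X -> degIn e X x = k) /\
  (forall v, v \notin X ->
     [|| degIn e X v == 0%N, (2 * degIn e X v == #|X|)%N | degIn e X v == #|X|]).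

(* vertices outside X with exactly |X|/2 neighbours in X (columns of N) *)
Definition half_set (T : finType) (e : rel T) (X : {set T}) : {set T} :=
  [set v | (v \notin X) && (2 * degIn e X v == #|X|)%N].

Definition gm_switch (T : finType) (e : rel T) (X : {set T}) : rel T :=
  fun u v =>
    if ((u \in X) && (v \in half_set e X)) || ((v \in X) && (u \in half_set e X))
    then ~~ e u v else e u v.

Definition tensor_graph (U T : finType) (eH : rel U) (eG : rel T) : rel (U * T) :=
  fun p q => eH p.1 q.1 && eG p.2 q.2.

Definition strong_tensor_graph (U T : finType) (eH : rel U) (eG : rel T)
  : rel (U * T) :=
  fun p q => ((p.1 == q.1) || eH p.1 q.1) && eG p.2 q.2.

Definition adjmx (T : finType) (e : rel T) : 'M[algC]_#|T| :=
  \matrix_(i, j) (e (enum_val i) (enum_val j))%:R.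

(* Cospectral: same spectrum (with multiplicities) of the adjacency matrices,
   i.e. equal characteristic polynomials over the algebraically closed algC. *)
Definition cospectral (T : finType) (e e' : rel T) : Prop :=
  char_poly (adjmx e) = char_poly (adjmx e').

Definition isomorphic (T : finType) (e e' : rel T) : Prop :=
  exists f : {perm T}, forall u v, e u v = e' (f u) (f v).

Definition Lambda_list (T : finType) (e : rel T) (X : {set T}) : seq nat :=
  [seq lambda e x y | x <- enum X, y <- enum (~: X)].

From mathcomp Require Import all_boot all_order all_algebra all_fingroup all_field.
From mathcomp Require Import zify ring.
Set Implicit Arguments. Unset Strict Implicit. Unset Printing Implicit Defensive.

(* Godsil-McKay switching at S is the similarity A' = Q A Q by the involution
   Q = (2/|S|) J - I on the S block (identity elsewhere), hence preserves the
   spectrum; {i} * X is again a switching set in the tensor product H * G and in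
   the strengthened product, which is the tensor product with H + I.
   For non-isomorphism, count the ordered pairs of vertices with at least
   t = M deg(x) common neighbours, where M is the largest number of common
   neighbours of i with another vertex of H.  Common-neighbour numbers
   multiply over the tensor product.  Switching preserves them inside and
   outside {i} * X, and the hypothesis on the multisets of lambda's matches the
   counts over the cross pairs (i, x), (c, w) with w outside X.  Among the
   remaining cross pairs, with c <> i and w in X, the original product reaches t
   at (i, x), (c, x) for c a maximiser, whereas after switching every such pair
   has fewer common neighbours: in G, x and w have a common neighbour among the
   vertices with |X|/2 neighbours in X, and switching toggles exactly those
   adjacencies of x. *)

Section BoolSums.
Variables (T : finType) (A : {pred T}).

Lemma sum_mem_card : \sum_z (z \in A) = #|A|.
Proof. by rewrite -sum1_card [RHS]big_mkcond; apply: eq_bigr => z _; case: (z \in A). Qed.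

Lemma sum_predC (a : pred T) : \sum_(w in A) a w + \sum_(w in A) ~~ a w = #|A|.
Proof. by rewrite -big_split -sum1_card; apply: eq_bigr => w _; case: (a w). Qed.

Lemma sum_andb_negb (a b : pred T) :
  \sum_(w in A) (a w && b w) + \sum_(w in A) (a w && ~~ b w) = \sum_(w in A) a w.
Proof. by rewrite -big_split; apply: eq_bigr => w _; case: (a w); case: (b w). Qed.

Lemma sum_norb (a b : pred T) :
  \sum_(w in A) (~~ a w && ~~ b w) + \sum_(w in A) a w + \sum_(w in A) b w
  = #|A| + \sum_(w in A) (a w && b w).
Proof.
rewrite -!big_split -sum1_card -big_split; apply: eq_bigr => w _.
by case: (a w); case: (b w).
Qed.

Lemma sum_ge_term (F : T -> nat) z : z \in A -> F z <= \sum_(w in A) F w.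
Proof. by move=> zA; rewrite (bigD1 z) //= leq_addr. Qed.

Lemma sum_eq0_all (b : pred T) : \sum_(w in A) b w = 0 -> {in A, forall z, ~~ b z}.
Proof.
move=> Hb z zA; apply/negP => bz.
by have := sum_ge_term (fun w => nat_of_bool (b w)) zA; rewrite Hb bz.
Qed.

Lemma sum_eq_card_all (b : pred T) : \sum_(w in A) b w = #|A| -> {in A, forall z, b z}.
Proof.
move=> Hb z zA; apply/negPn; apply: (@sum_eq0_all (fun w => ~~ b w)) zA.
by have := sum_predC b; rewrite Hb; lia.
Qed.

Lemma sum_gt0_exists (b : pred T) : 0 < \sum_(w in A) b w -> exists2 z, z \in A & b z.
Proof.
move=> Hpos; case: (pickP [pred z | (z \in A) && b z]) => [z /andP[]|none]; first by exists z.
by move: Hpos; rewrite big1 // => z zA; move: (none z); rewrite /= zA; case: (b z).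
Qed.

End BoolSums.

Section Counts.
Variables (T : finType) (e : rel T).

Lemma lambdaE p q : lambda e p q = \sum_z (e p z && e q z).
Proof. by rewrite /lambda -sum_mem_card; apply: eq_bigr => z _; rewrite inE. Qed.

Lemma degE x : deg e x = \sum_z e x z.
Proof. by rewrite /deg -sum_mem_card; apply: eq_bigr => z _; rewrite inE. Qed.

Lemma degInE (X : {set T}) v : degIn e X v = \sum_(y in X) e v y.
Proof.
rewrite /degIn -sum_mem_card [RHS]big_mkcond; apply: eq_bigr => y _.
by rewrite inE; case: (y \in X).
Qed.

Lemma lambdaC p q : lambda e p q = lambda e q p.
Proof. by rewrite !lambdaE; apply: eq_bigr => z _; rewrite andbC. Qed.

Lemma lambda_diag x : lambda e x x = deg e x.
Proof. by rewrite lambdaE degE; apply: eq_bigr => z _; rewrite andbb. Qed.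

End Counts.

Section Switching.
Variables (T : finType) (e : rel T) (S : {set T}).
Local Notation e' := (gm_switch e S).
Local Notation H := (half_set e S).

Lemma half_set_notin v : v \in H -> v \notin S.
Proof. by rewrite inE => /andP[]. Qed.

Lemma half_set_degIn v : v \in H -> 2 * degIn e S v = #|S|.
Proof. by rewrite inE => /andP[_ /eqP]. Qed.

Lemma gm_switch_in p z : p \in S -> e' p z = e p z (+) (z \in H).
Proof.
move=> pS; have /negbTE pH : p \notin H by apply: contraL pS => /half_set_notin.
by rewrite /gm_switch pS pH andbF orbF /=; case: (z \in H); case: (e p z).
Qed.

Lemma gm_switch_out p z : p \notin S -> z \in S -> e' p z = e p z (+) (p \in H).
Proof.
move=> pS zS; rewrite /gm_switch (negbTE pS) zS /=.
by case: (p \in H); case: (e p z).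
Qed.

Lemma gm_switch_outout p z : p \notin S -> z \notin S -> e' p z = e p z.
Proof. by move=> pS zS; rewrite /gm_switch (negbTE pS) (negbTE zS). Qed.

Lemma gm_switch_sym : symmetric e -> symmetric e'.
Proof. by move=> es p q; rewrite /gm_switch orbC es. Qed.

Lemma sum_negb_half v : v \in H -> \sum_(z in S) ~~ e v z = \sum_(z in S) e v z.
Proof. by move=> /half_set_degIn; have := sum_predC S (e v); rewrite -degInE; lia. Qed.

Lemma degIn_switch_in v : v \in S -> degIn e' S v = degIn e S v.
Proof.
move=> vS; rewrite !degInE; apply: eq_bigr => z zS.
by rewrite gm_switch_in // (negbTE (contraL (@half_set_notin z) zS)) addbF.
Qed.

Lemma lambda_switch_in p q : p \in S -> q \in S ->
  2 * \sum_(z in H) e p z = #|H| -> 2 * \sum_(z in H) e q z = #|H| ->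
  lambda e' p q = lambda e p q.
Proof.
move=> pS qS Hp Hq; rewrite !lambdaE [LHS](bigID (mem H)) [RHS](bigID (mem H)) /=.
congr (_ + _); last by apply: eq_bigr => z /negbTE zH; rewrite !gm_switch_in // zH !addbF.
under eq_bigr => z zH do rewrite !gm_switch_in // zH !addbT.
by have := sum_norb H (e p) (e q); lia.
Qed.

Hypothesis HS : gm_switching_set e S.

Lemma switching_uniform v : v \notin S -> v \notin H ->
  exists b, forall z, z \in S -> e v z = b.
Proof.
move=> vS vH; move: (HS.2 v vS) vH; rewrite inE vS /=.
case/or3P => [/eqP H0| -> // | /eqP HF] _.
  by exists false => z zS; apply/negbTE; apply: sum_eq0_all zS; rewrite -degInE.
by exists true; apply: sum_eq_card_all; rewrite -degInE.
Qed.

Lemma degIn_switch_out v : v \notin S -> degIn e' S v = degIn e S v.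
Proof.
move=> vS; rewrite !degInE.
under eq_bigr => z zS do rewrite gm_switch_out //.
case: (boolP (v \in H)) => vH; last by under eq_bigr do rewrite addbF.
by under eq_bigr do rewrite addbT; rewrite sum_negb_half.
Qed.

Lemma adj_add_switch_out v z : v \notin S -> z \in S ->
  #|S| * (e v z + e' v z) = 2 * degIn e S v.
Proof.
move=> vS zS; rewrite gm_switch_out //.
case: (boolP (v \in H)) => vH.
  by rewrite -(half_set_degIn vH) addbT; case: (e v z); rewrite /= muln1.
have [b Hb] := switching_uniform vS vH.
rewrite degInE Hb // addbF; under eq_bigr => y yS do rewrite Hb //.
rewrite sum_nat_const; lia.
Qed.

Lemma lambda_switch_out p q : p \notin S -> q \notin S -> lambda e' p q = lambda e p q.
Proof.
move=> pS qS; rewrite !lambdaE [LHS](bigID (mem S)) [RHS](bigID (mem S)) /=.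
congr (_ + _); last by apply: eq_bigr => z zS; rewrite !gm_switch_outout.
under eq_bigr => z zS do rewrite !gm_switch_out //.
case: (boolP (p \in H)) => pH; case: (boolP (q \in H)) => qH.
- under eq_bigr do rewrite !addbT.
  have := sum_norb S (e p) (e q); rewrite -!degInE.
  by move: (half_set_degIn pH) (half_set_degIn qH); lia.
- have [b Hb] := switching_uniform qS qH.
  under eq_bigr => z zS do rewrite addbT addbF Hb //.
  under [RHS]eq_bigr => z zS do rewrite Hb //.
  case: b {Hb}; last by rewrite !big1 // => z _; rewrite andbF.
  by under eq_bigr do rewrite andbT; under [RHS]eq_bigr do rewrite andbT; apply: sum_negb_half.
- have [b Hb] := switching_uniform pS pH.
  under eq_bigr => z zS do rewrite addbT addbF Hb //.
  under [RHS]eq_bigr => z zS do rewrite Hb //.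
  by case: b {Hb}; [apply: sum_negb_half | rewrite !big1].
- by under eq_bigr do rewrite !addbF.
Qed.

End Switching.

Section Cospectral.
Import GRing.Theory Num.Theory.
Local Open Scope ring_scope.

Lemma char_poly_conj_invol (R : comNzRingType) n (Q A : 'M[R]_n) :
  Q *m Q = 1%:M -> char_poly (Q *m A *m Q) = char_poly A.
Proof.
move=> QQ; rewrite /char_poly /char_poly_mx.
set Qp := map_mx polyC Q.
have QpQp : Qp *m Qp = 1%:M by rewrite -map_mxM QQ map_scalar_mx /= polyC1.
have -> : 'X%:M - map_mx polyC (Q *m A *m Q) = Qp *m ('X%:M - map_mx polyC A) *m Qp.
  rewrite !map_mxM -/Qp mulmxBr mulmxBl; congr (_ - _).
  by rewrite mul_mx_scalar -scalemxAl QpQp -mul_scalar_mx mulmx1.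
by rewrite !det_mulmx mulrC mulrA -det_mulmx QpQp det1 mul1r.
Qed.

Variable T : finType.

Definition fun_mx (F : T -> T -> algC) : 'M[algC]_#|T| :=
  \matrix_(a, b) F (enum_val a) (enum_val b).

Lemma fun_mx_mul (F G : T -> T -> algC) :
  fun_mx F *m fun_mx G = fun_mx (fun p q => \sum_r F p r * G r q).
Proof.
apply/matrixP => a b; rewrite !mxE.
under eq_bigr do rewrite !mxE.
have := big_enum_val (op := +%R) (idx := 0) (A := pred_of_simpl (@predT T))
  (fun r => F (enum_val a) r * G r (enum_val b)).
by move=> H; apply: (etrans (esym H)); apply: eq_big.
Qed.

Lemma sum_delta (p : T) (F : T -> algC) : \sum_r (p == r)%:R * F r = F p.
Proof.
rewrite (bigD1 p) //= eqxx mul1r big1 ?addr0 // => r /negbTE.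
by rewrite eq_sym => ->; rewrite mul0r.
Qed.

Variables (e : rel T) (S : {set T}).
Hypotheses (es : symmetric e) (HS : gm_switching_set e S) (S0 : (0 < #|S|)%N).
Local Notation e' := (gm_switch e S).
Local Notation s := (2 / #|S|%:R : algC).

Definition gm_conj (p r : T) : algC :=
  if (p \in S) && (r \in S) then s - (p == r)%:R else (p == r)%:R.

Lemma gm_conjC p r : gm_conj p r = gm_conj r p.
Proof. by rewrite /gm_conj andbC eq_sym. Qed.

Lemma sum_gm_conj p (G : T -> algC) :
  \sum_r gm_conj p r * G r = if p \in S then s * \sum_(r in S) G r - G p else G p.
Proof.
case: ifP => pS; last by rewrite -(sum_delta p G); apply: eq_bigr => r _; rewrite /gm_conj pS.
rewrite [\sum_(r in S) _]big_mkcond mulr_sumr -(sum_delta p G) -sumrB; apply: eq_bigr => r _.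
rewrite /gm_conj pS /=; case: ifP => rS; first by rewrite mulrBl.
by case: eqP => [pr|]; [rewrite -pr pS in rS | rewrite mulr0 mul0r subr0].
Qed.

Lemma gm_conj_invol p q : \sum_r gm_conj p r * gm_conj r q = (p == q)%:R.
Proof.
rewrite sum_gm_conj; case: ifP => pS; last by rewrite /gm_conj pS.
have sS : s * #|S|%:R = 2 by rewrite divfK // pnatr_eq0 -lt0n.
case: (boolP (q \in S)) => qS.
  under eq_bigr => r rS do rewrite /gm_conj rS qS /=.
  rewrite sumrB sumr_const (bigD1 q) //= eqxx big1 ?addr0 => [|r /andP[_ /negbTE ->]] //.
  rewrite /gm_conj pS qS /= -[s *+ _]mulr_natr mulrBr sS; ring.
have -> : \sum_(r in S) gm_conj r q = 0.
  apply: big1 => r rS; rewrite /gm_conj rS (negbTE qS) /=.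
  by case: eqP => // E; move: qS; rewrite -E rS.
rewrite /gm_conj pS (negbTE qS) /= mulr0 sub0r.
by case: eqP => [E|_]; [move: qS; rewrite -E pS | rewrite oppr0].
Qed.

Lemma gm_conj_intertwine p q :
  \sum_r (e p r)%:R * gm_conj r q = \sum_r gm_conj p r * (e' r q)%:R.
Proof.
have nS : #|S|%:R != 0 :> algC by rewrite pnatr_eq0 -lt0n.
have adj_add v z : v \notin S -> z \in S ->
    (e v z)%:R + (e' v z)%:R = s * (degIn e S v)%:R :> algC.
  move=> vS zS; apply: (mulfI nS).
  by rewrite -natrD -natrM adj_add_switch_out // natrM mulrA [_ * s]mulrC divfK.
have es' : symmetric e' := gm_switch_sym S es.
under eq_bigr do rewrite mulrC gm_conjC.
under [in RHS]eq_bigr do rewrite es'.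
rewrite !sum_gm_conj -!natr_sum -!degInE.
case: (boolP (p \in S)) => pS; case: (boolP (q \in S)) => qS.
- have [k Hk] := HS.1.
  rewrite degIn_switch_in // (Hk p pS) (Hk q qS) gm_switch_in //.
  by rewrite (negbTE (contraL (@half_set_notin _ e S p) pS)) addbF es.
- by rewrite degIn_switch_out // -(adj_add q p) // addrK es.
- by rewrite -(adj_add p q) // addrC addKr es'.
- by rewrite es' gm_switch_outout.
Qed.

Theorem gm_switch_cospectral : cospectral e e'.
Proof.
have adjE (f : rel T) : adjmx f = fun_mx (fun p q => (f p q)%:R) by [].
set Q := fun_mx gm_conj.
have QQ : Q *m Q = 1%:M.
  apply/matrixP => a b; rewrite fun_mx_mul /fun_mx !mxE gm_conj_invol.
  by rewrite (inj_eq enum_val_inj).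
have AQ : adjmx e *m Q = Q *m adjmx e'.
  by rewrite !adjE !fun_mx_mul; apply/matrixP => a b; rewrite !mxE gm_conj_intertwine.
rewrite /cospectral -(char_poly_conj_invol (adjmx e') QQ).
by rewrite -AQ -mulmxA QQ mulmx1.
Qed.

End Cospectral.

Section LambdaCount.
Variable T : finType.

Definition lambda_count (t : nat) (e : rel T) : nat :=
  \sum_p \sum_q (t <= lambda e p q).

Definition cross_count (t : nat) (e : rel T) (S : {set T}) : nat :=
  \sum_(p in S) \sum_(q in ~: S) (t <= lambda e p q).

Lemma lambda_perm (e e' : rel T) (f : {perm T}) :
  (forall u v, e u v = e' (f u) (f v)) -> forall u v, lambda e' (f u) (f v) = lambda e u v.
Proof.
move=> Hf u v; rewrite !lambdaE (reindex_inj (@perm_inj _ f)) /=.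
by apply: eq_bigr => z _; rewrite -!Hf.
Qed.

Lemma lambda_count_iso t (e e' : rel T) :
  isomorphic e e' -> lambda_count t e = lambda_count t e'.
Proof.
move=> [f Hf]; rewrite /lambda_count [RHS](reindex_inj (@perm_inj _ f)) /=.
apply: eq_bigr => p _; rewrite [RHS](reindex_inj (@perm_inj _ f)) /=.
by apply: eq_bigr => q _; rewrite (lambda_perm Hf).
Qed.

Lemma lambda_count_split t (e : rel T) (S : {set T}) :
  lambda_count t e = \sum_(p in S) \sum_(q in S) (t <= lambda e p q)
    + 2 * cross_count t e S + \sum_(p in ~: S) \sum_(q in ~: S) (t <= lambda e p q).
Proof.
have splitS (F : T -> nat) : \sum_q F q = \sum_(q in S) F q + \sum_(q in ~: S) F q.
  by rewrite (bigID (mem S)) /=; congr (_ + _); apply: eq_bigl => q; rewrite inE.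
rewrite /lambda_count /cross_count splitS.
under eq_bigr do rewrite splitS; under [X in _ + X]eq_bigr do rewrite splitS.
rewrite !big_split /= [\sum_(p in ~: S) \sum_(q in S) _]exchange_big /=.
under [X in _ + (X + _)]eq_bigr do under eq_bigr do rewrite lambdaC.
lia.
Qed.

Lemma noniso_of_cross_count t (e e' : rel T) (S : {set T}) :
  {in S &, forall p q, lambda e' p q = lambda e p q} ->
  {in ~: S &, forall p q, lambda e' p q = lambda e p q} ->
  cross_count t e' S < cross_count t e S -> ~ isomorphic e e'.
Proof.
move=> Hin Hout Hlt /(lambda_count_iso t); rewrite !(lambda_count_split t _ S).
have -> : \sum_(p in S) \sum_(q in S) (t <= lambda e' p q) =
          \sum_(p in S) \sum_(q in S) (t <= lambda e p q).
  by apply: eq_bigr => p pS; apply: eq_bigr => q qS; rewrite Hin.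
have -> : \sum_(p in ~: S) \sum_(q in ~: S) (t <= lambda e' p q) =
          \sum_(p in ~: S) \sum_(q in ~: S) (t <= lambda e p q).
  by apply: eq_bigr => p pS; apply: eq_bigr => q qS; rewrite Hout.
lia.
Qed.

End LambdaCount.

Section TensorProduct.
Variables (U T : finType) (h : rel U) (e : rel T) (i : U) (X : {set T}).
Local Notation S := (setX [set i] X).

Lemma sum_pair (F : U * T -> nat) : \sum_z F z = \sum_c \sum_w F (c, w).
Proof. by rewrite pair_bigA; apply: eq_bigr => -[c w]. Qed.

Lemma in_setX1 c w : ((c, w) \in S) = (c == i) && (w \in X).
Proof. by rewrite in_setX in_set1. Qed.

Lemma card_setX1 : #|S| = #|X|.
Proof. by rewrite cardsX cards1 mul1n. Qed.

Lemma sum_setX1 (F : U * T -> nat) : \sum_(y in S) F y = \sum_(x in X) F (i, x).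
Proof.
rewrite big_mkcond sum_pair (bigD1 i) //= [X in _ + X]big1 ?addn0 => [|c /negbTE ci].
  by rewrite [RHS]big_mkcond; apply: eq_bigr => w _; rewrite in_setX1 eqxx.
by rewrite big1 // => w _; rewrite in_setX1 ci.
Qed.

Lemma lambda_tensor a u b v :
  lambda (tensor_graph h e) (a, u) (b, v) = lambda h a b * lambda e u v.
Proof.
rewrite !lambdaE sum_pair big_distrl; apply: eq_bigr => c _.
rewrite big_distrr; apply: eq_bigr => w _ /=.
by rewrite /tensor_graph /=; case: (h a c); case: (h b c); case: (e u w); case: (e v w).
Qed.

Lemma degIn_tensor c w : degIn (tensor_graph h e) S (c, w) = h c i * degIn e X w.
Proof.
rewrite !degInE sum_setX1 big_distrr; apply: eq_bigr => x _.
by rewrite /tensor_graph /=; case: (h c i); case: (e w x).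
Qed.

Lemma sum_setCX1 (F : U * T -> nat) : \sum_(q in ~: S) F q =
  \sum_c \sum_(w in ~: X) F (c, w) + \sum_(c | c != i) \sum_(w in X) F (c, w).
Proof.
rewrite big_mkcond sum_pair [X in _ + X]big_mkcond -big_split /=; apply: eq_bigr => c _.
case: (eqVneq c i) => [->|ci] /=.
  by rewrite addn0 [RHS]big_mkcond; apply: eq_bigr => w _; rewrite !inE eqxx.
have -> : \sum_w (if (c, w) \in ~: S then F (c, w) else 0) = \sum_w F (c, w).
  by apply: eq_bigr => w _; rewrite !inE (negbTE ci).
rewrite (bigID (mem X)) addnC /=; congr (_ + _); by apply: eq_bigl => w; rewrite inE.
Qed.

Lemma cross_count_tensor t (G : rel (U * T)) : cross_count t G S =
    \sum_c \sum_(x in X) \sum_(w in ~: X) (t <= lambda G (i, x) (c, w))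
  + \sum_(c | c != i) \sum_(x in X) \sum_(w in X) (t <= lambda G (i, x) (c, w)).
Proof.
rewrite /cross_count sum_setX1; under eq_bigr do rewrite sum_setCX1.
by rewrite big_split /= exchange_big /= [X in _ + X]exchange_big.
Qed.

Lemma tensor_graph_sym : symmetric h -> symmetric e -> symmetric (tensor_graph h e).
Proof. by move=> hs es p q; rewrite /tensor_graph hs es. Qed.

End TensorProduct.

Definition coclique_case (T : finType) (e : rel T) (X : {set T}) : Prop :=
  (forall x1 x2, x1 \in X -> x2 \in X -> ~~ e x1 x2)
  /\ (1 < #|half_set e X|)%N
  /\ (forall x1 x2, x1 \in X -> x2 \in X -> x1 != x2 ->
        exists y, (y \in half_set e X) && (e x1 y == e x2 y)).

Definition halfreg_case (T : finType) (e : rel T) (X : {set T}) : Prop :=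
  (forall x, x \in X -> (2 * degIn e X x)%N = #|X|)
  /\ (forall x1 x2, x1 \in X -> x2 \in X -> x1 != x2 ->
        exists z, (z \in X :|: half_set e X) && (e x1 z == e x2 z)).

(* Unlike [half_set e X], this also contains the vertices of [X] itself. *)
Definition halfdeg_set (T : finType) (e : rel T) (X : {set T}) : {set T} :=
  [set v | 2 * degIn e X v == #|X|].

(* [lambda] of [(i, x)] and [(j, v)] in the tensor product switched at
   [{i} * X] is [lambda H i j] times this (see [lambda_tensor_switch]). *)
Definition twisted_lambda (T : finType) (e : rel T) (X : {set T}) (x v : T) : nat :=
  \sum_w ((e x w (+) (w \in halfdeg_set e X)) && e v w).

Lemma half_setE (T : finType) (e : rel T) (X : {set T}) v :
  (v \in half_set e X) = (v \notin X) && (v \in halfdeg_set e X).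
Proof. by rewrite !inE. Qed.

Section SwitchedGraph.
Variables (T : finType) (e : rel T) (X : {set T}).
Hypotheses (es : symmetric e) (HX : gm_switching_set e X) (X0 : 0 < #|X|).
Hypothesis Hdeg : forall x1 x2, x1 \in X -> x2 \in X -> deg e x1 = deg e x2.
Hypothesis Hcase : coclique_case e X \/ halfreg_case e X.
Local Notation W := (halfdeg_set e X).

Lemma coclique_halfdeg_notin w : coclique_case e X -> w \in W -> w \notin X.
Proof.
move=> [Hco _] wW; apply: contraTN wW => wX; rewrite inE degInE big1 ?muln0.
  by rewrite eq_sym lt0n_neq0.
by move=> x xX; rewrite (negbTE (Hco _ _ wX xX)).
Qed.

Lemma halfreg_halfdeg w : halfreg_case e X -> w \in X -> w \in W.
Proof. by move=> [Hb _] wX; rewrite inE Hb. Qed.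

Lemma degIn_trichotomy w :
  [|| degIn e X w == 0, 2 * degIn e X w == #|X| | degIn e X w == #|X|].
Proof.
case: (boolP (w \in X)) => wX; last exact: HX.2.
case: Hcase => [Hco|[Hb _]]; last by rewrite Hb // eqxx orbT.
by rewrite degInE big1 // => x xX; rewrite (negbTE (Hco.1 _ _ wX xX)).
Qed.

Lemma adj_notin_halfdeg x w : x \in X -> w \notin W -> e x w = (degIn e X w == #|X|).
Proof.
move=> xX; rewrite inE es; case/or3P: (degIn_trichotomy w) => [/eqP H0| -> // | /eqP HF] _.
  rewrite H0 eq_sym (negbTE (lt0n_neq0 X0)); apply/negbTE.
  by apply: (@sum_eq0_all _ X (e w)) => //; rewrite -degInE.
by rewrite HF eqxx; apply: (@sum_eq_card_all _ X (e w)) => //; rewrite -degInE.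
Qed.

(* All of [X] has the same degree and sees each vertex outside [W] entirely or
   not at all, so each [x] in [X] has the same number of neighbours in [W];
   double counting the edges between [X] and [W] then gives that number. *)
Lemma sum_halfdeg_adj x : x \in X -> 2 * \sum_(w in W) e x w = #|W|.
Proof.
move=> xX.
pose c := \sum_(w in ~: W) (degIn e X w == #|X|).
have degW y : y \in X -> deg e y = \sum_(w in W) e y w + c.
  move=> yX; rewrite degE (bigID (mem W)) /=; congr (_ + _).
  by apply: eq_big => [w|w wW]; rewrite ?inE ?adj_notin_halfdeg.
have sumW y : y \in X -> \sum_(w in W) e y w = \sum_(w in W) e x w.
  by move=> yX; move: (degW y yX) (degW x xX); rewrite (Hdeg yX xX); lia.
have double : 2 * \sum_(y in X) \sum_(w in W) e y w = #|X| * #|W|.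
  rewrite exchange_big big_distrr /= mulnC -sum_nat_const.
  apply: eq_bigr => w; rewrite inE degInE => /eqP <-.
  by congr (2 * _); apply: eq_bigr => y _; rewrite es.
move: double; rewrite (eq_bigr _ sumW) sum_nat_const mulnCA.
by move/eqP; rewrite eqn_pmul2l // => /eqP.
Qed.

Lemma sum_half_set_adj x : x \in X ->
  2 * \sum_(w in half_set e X) e x w = #|half_set e X|.
Proof.
move=> xX; have := sum_halfdeg_adj xX.
have -> : half_set e X = W :\: X by apply/setP => w; rewrite half_setE !inE andbC.
rewrite (big_setID X) /= -(cardsID X W).
suff : 2 * \sum_(w in W :&: X) e x w = #|W :&: X| by lia.
case: Hcase => [Hco|Hb].
  have -> : W :&: X = set0.
    apply/setP => w; rewrite in_setI in_set0.
    by case: (boolP (w \in W)) => // /(coclique_halfdeg_notin Hco)/negbTE ->.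
  by rewrite big_set0 cards0.
have -> : W :&: X = X by apply/setIidPr/subsetP => w /(halfreg_halfdeg Hb).
by rewrite -degInE Hb.1.
Qed.

Lemma halfdeg_agree x v : x \in X -> v \in X ->
  exists2 w, w \in W & e x w == e v w.
Proof.
move=> xX vX; case: (eqVneq x v) => [<-|xv].
  case: Hcase => [[_ [Hhalf _]]|Hb]; last by exists x; [apply: halfreg_halfdeg|].
  have [y] : exists y, y \in half_set e X by apply/card_gt0P; apply: ltnW.
  by rewrite half_setE => /andP[_ yW]; exists y.
case: Hcase => [[_ [_ Hco]]|Hb].
  by have [y /andP[]] := Hco x v xX vX xv; rewrite half_setE => /andP[_ yW]; exists y.
have [z /andP[]] := Hb.2 x v xX vX xv; rewrite in_setU half_setE => /orP[zX|/andP[_ zW]].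
  by exists z => //; apply: halfreg_halfdeg.
by exists z.
Qed.

(* Both [x] and [v] see exactly half of [W], so agreeing somewhere on [W]
   forces a common neighbour in [W]. *)
Lemma halfdeg_common_adj x v : x \in X -> v \in X ->
  exists w, [&& w \in W, e x w & e v w].
Proof.
move=> xX vX; have [w0 w0W /eqP agree] := halfdeg_agree xX vX.
have nor_and : \sum_(w in W) (~~ e x w && ~~ e v w) = \sum_(w in W) (e x w && e v w).
  by have := sum_norb W (e x) (e v); move: (sum_halfdeg_adj xX) (sum_halfdeg_adj vX); lia.
have : 0 < \sum_(w in W) (e x w && e v w).
  case: (boolP (e v w0)) => evw0; last rewrite -nor_and.
    by apply: (leq_trans _ (sum_ge_term _ w0W)); rewrite agree evw0.
  by apply: (leq_trans _ (sum_ge_term _ w0W)); rewrite agree (negbTE evw0).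
by move=> /sum_gt0_exists [w wW /andP[exw evw]]; exists w; rewrite wW exw evw.
Qed.

Lemma twisted_lambda_lt_deg x v : x \in X -> v \in X -> twisted_lambda e X x v < deg e v.
Proof.
move=> xX vX; have [w /and3P[wW exw evw]] := halfdeg_common_adj xX vX.
rewrite /twisted_lambda degE (bigD1 w) //= [X in _ < X](bigD1 w) //= exw evw wW /=.
by rewrite add0n add1n ltnS; apply: leq_sum => z _; case: (e v z); rewrite ?andbT ?andbF ?leq_b1.
Qed.

Lemma sum_switch_sides x v : x \in X ->
  \sum_(w in X) (e x w && (e v w (+) (v \in W))) =
  \sum_(w in X) ((e x w (+) (w \in W)) && e v w).
Proof.
move=> xX; case: Hcase => [Hco|Hb].
  rewrite !big1 // => w wX; rewrite (negbTE (Hco.1 _ _ xX wX)) //=.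
  by rewrite (negbTE (contraTN (coclique_halfdeg_notin Hco) wX)).
under [RHS]eq_bigr => w wX do rewrite halfreg_halfdeg // addbT.
have Hx := Hb.1 x xX; rewrite degInE in Hx.
have Sx := sum_andb_negb X (e x) (e v); have Sv := sum_andb_negb X (e v) (e x).
have Evx : \sum_(w in X) (e v w && e x w) = \sum_(w in X) (e x w && e v w).
  by apply: eq_bigr => w _; rewrite andbC.
have Evnx : \sum_(w in X) (e v w && ~~ e x w) = \sum_(w in X) (~~ e x w && e v w).
  by apply: eq_bigr => w _; rewrite andbC.
case: (boolP (v \in W)) => vW.
  under eq_bigr do rewrite addbT.
  by move: vW; rewrite inE degInE => /eqP; lia.
under eq_bigr do rewrite addbF.
have vX : v \notin X by apply: contra vW; apply: halfreg_halfdeg.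
have vH : v \notin half_set e X by rewrite half_setE negb_and vW orbT.
have [b Hv] := switching_uniform HX vX vH.
under eq_bigr => w wX do rewrite Hv //; under [in RHS]eq_bigr => w wX do rewrite Hv //.
case: b {Hv}; last by rewrite !big1 // => w _; rewrite andbF.
under eq_bigr do rewrite andbT; under [in RHS]eq_bigr do rewrite andbT.
by have := sum_predC X (e x); lia.
Qed.

Lemma twisted_lambdaE x v : x \in X ->
  twisted_lambda e X x v = \sum_w ((e x w (+) (w \notin X) && (w \in W)) &&
                                   (e v w (+) (w \in X) && (v \in W))).
Proof.
move=> xX; rewrite /twisted_lambda [LHS](bigID (mem X)) [RHS](bigID (mem X)) /=.
congr (_ + _); last by apply: eq_bigr => w /negbTE wX; rewrite wX /= addbF.
by rewrite -sum_switch_sides //; apply: eq_bigr => w wX; rewrite wX /= addbF.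
Qed.

Lemma lambda_switch_twisted x v : x \in X -> v \notin X ->
  lambda (gm_switch e X) x v = twisted_lambda e X x v.
Proof.
move=> xX vX; rewrite twisted_lambdaE // lambdaE; apply: eq_bigr => w _.
rewrite gm_switch_in // half_setE; case: (boolP (w \in X)) => wX /=.
  by rewrite gm_switch_out // half_setE vX addbF.
by rewrite gm_switch_outout // addbF.
Qed.

Lemma count_Lambda_list (G : rel T) (a : pred nat) :
  count a (Lambda_list G X) = \sum_(x in X) \sum_(w in ~: X) a (lambda G x w).
Proof.
rewrite -sum1_count big_mkcond big_allpairs_dep /= big_enum; apply: eq_bigr => x _.
by rewrite big_enum; apply: eq_bigr => w _; case: (a _).
Qed.

Hypothesis HLambda : perm_eq (Lambda_list e X) (Lambda_list (gm_switch e X) X).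

Lemma sum_cross_twisted_lambda (a : pred nat) :
  \sum_(x in X) \sum_(w in ~: X) a (twisted_lambda e X x w) =
  \sum_(x in X) \sum_(w in ~: X) a (lambda e x w).
Proof.
rewrite -count_Lambda_list (seq.permP HLambda) count_Lambda_list.
apply: eq_bigr => x xX; apply: eq_bigr => w.
by rewrite inE => wX; rewrite lambda_switch_twisted.
Qed.

Section TensorSwitch.
Variables (U : finType) (h : rel U) (i : U).
Hypothesis hs : symmetric h.
Local Notation P := (tensor_graph h e).
Local Notation S := (setX [set i] X).
Local Notation P' := (gm_switch (tensor_graph h e) (setX [set i] X)).

Lemma half_set_tensor c w :
  ((c, w) \in half_set P S) = ~~ ((c == i) && (w \in X)) && h c i && (w \in W).
Proof.
rewrite inE in_setX1 degIn_tensor card_setX1.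
case: (h c i); rewrite ?mul1n ?andbT ?andbF ?inE //= muln0 [0 == _]eq_sym.
by rewrite (negbTE (lt0n_neq0 X0)) andbF.
Qed.

Lemma tensor_switching_set : gm_switching_set P S.
Proof.
have [k Hk] := HX.1; split.
  exists (h i i * k) => -[c x]; rewrite in_setX1 => /andP[/eqP -> xX].
  by rewrite degIn_tensor Hk.
move=> [c w] _; rewrite degIn_tensor card_setX1.
by case: (h c i); rewrite ?mul1n ?mul0n ?eqxx ?degIn_trichotomy.
Qed.

Lemma tensor_switch_adj_in x c w : x \in X ->
  P' (i, x) (c, w) = (h i c && e x w) (+) (~~ ((c == i) && (w \in X)) && h c i && (w \in W)).
Proof. by move=> xX; rewrite gm_switch_in ?in_setX1 ?eqxx // half_set_tensor. Qed.

Lemma tensor_switch_adj_out b v c w : (b, v) \notin S ->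
  P' (b, v) (c, w) = (h b c && e v w) (+) [&& c == i, w \in X, h b i & v \in W].
Proof.
move=> bvS; case: (boolP ((c, w) \in S)) => cwS.
  rewrite gm_switch_out // half_set_tensor; move: bvS cwS; rewrite !in_setX1.
  by move=> -> /andP[-> ->].
rewrite gm_switch_outout //; move: cwS; rewrite in_setX1.
by case/nandP => /negbTE ->; rewrite /= ?andbF addbF.
Qed.

Lemma lambda_tensor_switch x b v : x \in X -> (b, v) \notin S ->
  lambda P' (i, x) (b, v) = lambda h i b * twisted_lambda e X x v.
Proof.
move=> xX bvS; rewrite !lambdaE sum_pair big_distrl /= (bigD1 i) //= [RHS](bigD1 i) //=.
congr (_ + _).
  rewrite (twisted_lambdaE _ xX) big_distrr /=; apply: eq_bigr => w _.
  rewrite tensor_switch_adj_in // tensor_switch_adj_out // eqxx (hs b i) /=.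
  by case: (h i i); case: (h i b); case: (e x w); case: (e v w); case: (w \in X);
    case: (w \in W); case: (v \in W).
apply: eq_bigr => c /negbTE ci; rewrite /twisted_lambda big_distrr /=.
apply: eq_bigr => w _; rewrite tensor_switch_adj_in // tensor_switch_adj_out // ci /= (hs c i).
by case: (h i c); case: (h b c); case: (e x w); case: (e v w); case: (w \in W).
Qed.

Lemma tensor_half_balanced s : s \in S ->
  2 * \sum_(z in half_set P S) P s z = #|half_set P S|.
Proof.
case: s => c0 x; rewrite in_setX1 => /andP[/eqP -> xX].
rewrite -sum_mem_card big_mkcond !sum_pair big_distrr; apply: eq_bigr => c _.
under eq_bigr => w _ do rewrite half_set_tensor.
under [RHS]eq_bigr => w _ do rewrite half_set_tensor.
rewrite /tensor_graph /= (hs c i); case: (boolP (h i c)) => hic; last first.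
  by rewrite !big1 // => w _; rewrite andbF.
case: (eqVneq c i) => [_|_] /=.
  transitivity (2 * \sum_(w in half_set e X) e x w).
    by congr (2 * _); rewrite [RHS]big_mkcond; apply: eq_bigr => w _; rewrite half_setE andbT.
  rewrite sum_half_set_adj // -sum_mem_card.
  by apply: eq_bigr => w _; rewrite half_setE andbT.
transitivity (2 * \sum_(w in W) e x w).
  by congr (2 * _); rewrite [RHS]big_mkcond; apply: eq_bigr.
by rewrite sum_halfdeg_adj // -sum_mem_card.
Qed.

Lemma tensor_switch_noniso : (exists2 j, j != i & 0 < lambda h i j) -> ~ isomorphic P P'.
Proof.
move=> [j ji j_pos]; have /card_gt0P [x0 x0X] := X0.
have [b bi Mb] : {b | b \in [pred c | c != i] & \max_(c | c != i) lambda h i c = lambda h i b}.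
  by apply: eq_bigmax_cond; apply/card_gt0P; exists j.
set M := \max_(c | c != i) lambda h i c in Mb.
have leM c : c != i -> lambda h i c <= M by move=> ci; apply: leq_bigmax_cond.
have M_pos : 0 < M by apply: leq_trans (leM j ji).
apply: (@noniso_of_cross_count _ (M * deg e x0) _ _ S).
- move=> p q pS qS; apply: lambda_switch_in => //; exact: tensor_half_balanced.
- by move=> p q; rewrite !in_setC; apply: (lambda_switch_out tensor_switching_set).
rewrite !cross_count_tensor.
have -> : \sum_c \sum_(x in X) \sum_(w in ~: X) (M * deg e x0 <= lambda P' (i, x) (c, w)) =
          \sum_c \sum_(x in X) \sum_(w in ~: X) (M * deg e x0 <= lambda P (i, x) (c, w)).
  apply: eq_bigr => c _.
  under [RHS]eq_bigr => x _ do under eq_bigr => w _ do rewrite lambda_tensor.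
  rewrite -(sum_cross_twisted_lambda (fun l => M * deg e x0 <= lambda h i c * l)).
  apply: eq_bigr => x xX; apply: eq_bigr => w; rewrite inE => wX.
  by rewrite lambda_tensor_switch ?in_setX1 ?(negbTE wX) ?andbF.
have -> : \sum_(c | c != i) \sum_(x in X) \sum_(w in X) (M * deg e x0 <= lambda P' (i, x) (c, w)) = 0.
  apply: big1 => c ci; apply: big1 => x xX; apply: big1 => w wX.
  rewrite lambda_tensor_switch ?in_setX1 ?(negbTE ci) //.
  have := twisted_lambda_lt_deg xX wX; rewrite (Hdeg wX x0X).
  by have := leM c ci; case: leqP => //; nia.
rewrite ltn_add2l (bigD1 b) //= (bigD1 x0) //= (bigD1 x0) //=.
by rewrite lambda_tensor lambda_diag -Mb leqnn.
Qed.

End TensorSwitch.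

End SwitchedGraph.

Unset Implicit Arguments.

Theorem theorem4p1 (T : finType) (e : rel T) (X : {set T})
  (Hsimple : simple_graph e)
  (HX : gm_switching_set e X)
  (HXne : (0 < #|X|)%N)
  (Hdeg : forall x1 x2, x1 \in X -> x2 \in X -> deg e x1 = deg e x2)
  (HLambda : perm_eq (Lambda_list e X) (Lambda_list (gm_switch e X) X))
  (Hcase :
     ( (forall x1 x2, x1 \in X -> x2 \in X -> ~~ e x1 x2)
       /\ (1 < #|half_set e X|)%N
       /\ (forall x1 x2, x1 \in X -> x2 \in X -> x1 != x2 ->
             exists y, (y \in half_set e X) && (e x1 y == e x2 y)) )
     \/
     ( (forall x, x \in X -> (2 * degIn e X x)%N = #|X|)
       /\ (forall x1 x2, x1 \in X -> x2 \in X -> x1 != x2 ->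
             exists z, (z \in X :|: half_set e X) && (e x1 z == e x2 z)) ))
  (U : finType) (eH : rel U) (HHsimple : simple_graph eH) (i : U) :
  let XX := setX [set i] X in
  gm_switching_set (tensor_graph eH e) XX /\
  gm_switching_set (strong_tensor_graph eH e) XX /\
  ((0 < deg eH i)%N ->
     cospectral (strong_tensor_graph eH e)
                (gm_switch (strong_tensor_graph eH e) XX) /\
     ~ isomorphic (strong_tensor_graph eH e)
                  (gm_switch (strong_tensor_graph eH e) XX)) /\
  ((exists j, eH i j && (1 < deg eH j)%N) ->
     cospectral (tensor_graph eH e) (gm_switch (tensor_graph eH e) XX) /\
     ~ isomorphic (tensor_graph eH e) (gm_switch (tensor_graph eH e) XX)).
Proof.
cbv zeta; have [es _] := Hsimple; have [hs hirr] := HHsimple.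
have Hc : coclique_case e X \/ halfreg_case e X := Hcase.
pose eH' a b := (a == b) || eH a b.
have eH's : symmetric eH' by move=> a b; rewrite /eH' eq_sym hs.
have -> : strong_tensor_graph eH e = tensor_graph eH' e by [].
have SX0 : 0 < #|setX [set i] X| by rewrite card_setX1.
have switching (h : rel U) : gm_switching_set (tensor_graph h e) (setX [set i] X).
  exact (tensor_switching_set HX Hc h i).
have cospectral_switch (h : rel U) : symmetric h ->
    cospectral (tensor_graph h e) (gm_switch (tensor_graph h e) (setX [set i] X)).
  by move=> hsym; apply: gm_switch_cospectral => //; apply: tensor_graph_sym.
have noniso (h : rel U) : symmetric h -> (exists2 j, j != i & 0 < lambda h i j) ->
    ~ isomorphic (tensor_graph h e) (gm_switch (tensor_graph h e) (setX [set i] X)).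
  by move=> hsym; apply: (tensor_switch_noniso es HX HXne Hdeg Hc HLambda hsym).
split; first exact: switching.
split; first exact: switching.
split=> [deg_i | [j /andP[ij deg_j]]]; split; try exact: cospectral_switch.
  apply: noniso => //; have /card_gt0P [j] := deg_i; rewrite inE => ij.
  exists j; first by apply: contraTneq ij => ->; rewrite hirr.
  by apply/card_gt0P; exists j; rewrite inE /eH' eqxx ij orbT.
apply: noniso => //.
have /subsetPn [b] : ~~ ([set y | eH j y] \subset [set i]).
  by apply: contraTN deg_j => /subset_leq_card; rewrite cards1 -ltnNge.
rewrite !inE => jb bi; exists b => //.
by apply/card_gt0P; exists j; rewrite inE ij hs.
Qed.
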